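(* Consider an execution of algorithm $\mathcal{A}_2$ (described in the context) in a synchronous message-passing system of $n$ processes with authentication in which up to $t<n$ processes are Byzantine. If a correct process $p_i$ decides a value $v \neq \bot$, then no correct process decides $\bot$.
   Context: Model: synchronous rounds, reliable channels between all pairs, unforgeable signatures, up to $t$ Byzantine processes; the others are correct. Terminating Reliable Broadcast (TRB) with sender $p$: $p$ broadcasts a value $m$ and every process delivers either a value or a special value $SF$, satisfying: (Termination) every correct process delivers some value; (Validity) if the sender is correct and broadcasts $m$, every correct process delivers $m$; (Integrity) a process delivers at most once, and if it delivers $m\ne SF$ then $m$ was broadcast by the sender; (Agreement) if a correct process delivers $m$, all correct processes deliver $m$. TRB is implemented in this model in $t+1$ rounds by the classical authenticated signature-chain algorithm. Algorithm $\mathcal{A}_2$, code of $p_i$ with input $v_i$: Phase 1: $n$ instances of TRB are run, instance $q$ having $p_q$ as sender; $p_i$ broadcasts $v_i$ in its own instance and sets $L_i[p_i] := v_i$; for each process $q$, $p_i$ sets $L_i[q]$ to the value (possibly $SF$) delivered in the instance with sender $q$. Phase 2: if at least $n-t$ entries of $L_i$ equal $v_i$, decide $v_i$; else, if some value $v$ appears at least $n-t$ times in $L_i$, decide such a $v$; else decide $\bot$. *)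

From mathcomp Require Import all_boot.
Set Implicit Arguments. Unset Strict Implicit. Unset Printing Implicit Defensive.

(* A TRB delivery is an [option V]: [Some m] = the value m, [None] = SF.
   A decision of A_2 is an [option V]: [Some v] = decide v, [None] = decide ⊥. *)

(* Phase 1 of A_2: [deliv q i] is the value delivered by process i in the TRB
   instance whose sender is p_q.  The TRB specification, as observed by the
   correct processes (set C), with [input q] the value broadcast by p_q
   when p_q is correct.  Termination and "delivers at most once" are encoded
   by [deliv] being a total function. *)
Record TRB_phase1 (V : eqType) (n : nat) (C : {set 'I_n})
    (input : 'I_n -> V) (deliv : 'I_n -> 'I_n -> option V) : Prop := {
  trb_validity : forall q i, q \in C -> i \in C -> deliv q i = Some (input q);
  trb_agreement : forall q i j, i \in C -> j \in C -> deliv q i = deliv q j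
}.

Definition A2_list (V : eqType) (n : nat) (input : 'I_n -> V)
    (deliv : 'I_n -> 'I_n -> option V) (i : 'I_n) : 'I_n -> option V :=
  fun q => if q == i then Some (input i) else deliv q i.

Definition cnt (V : eqType) (n : nat) (L : 'I_n -> option V) (x : option V) : nat :=
  #|[set q | L q == x]|.

(* Phase 2 of A_2 (the choice of "such a v" is nondeterministic, hence a relation). *)
Definition A2_decides {V : eqType} (n t : nat) (L : 'I_n -> option V) (vi : V)
    (d : option V) : Prop :=
  (n - t <= cnt L (Some vi) /\ d = Some vi)
  \/ (cnt L (Some vi) < n - t /\ exists w : V, n - t <= cnt L (Some w) /\ d = Some w)
  \/ (cnt L (Some vi) < n - t /\ (forall w : V, cnt L (Some w) < n - t) /\ d = None).
Arguments A2_decides {V} n t L vi d.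

(* All correct processes end phase 1 with the same vector L: for a correct
   sender q both the owner's own entry and TRB validity give [input q], and
   for a faulty sender TRB agreement applies.  Phase 2 therefore sees the same
   counts everywhere.  Deciding some v requires a value occurring at least
   n - t times in L, while deciding bottom requires that no value does, so the
   two cannot happen at two correct processes. *)

From mathcomp Require Import all_boot.
Set Implicit Arguments. Unset Strict Implicit. Unset Printing Implicit Defensive.

Section CorrectProcessesAgree.

Variables (V : eqType) (n : nat) (C : {set 'I_n}).
Variables (input : 'I_n -> V) (deliv : 'I_n -> 'I_n -> option V).
Hypothesis hTRB : TRB_phase1 C input deliv.

Lemma A2_list_correct_sender q i :
  q \in C -> i \in C -> A2_list input deliv i q = Some (input q).
Proof.
move=> hq hi; rewrite /A2_list.
by case: eqP => [-> // | _]; apply: (trb_validity hTRB).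
Qed.

Lemma A2_list_faulty_sender q i :
  q \notin C -> i \in C -> A2_list input deliv i q = deliv q i.
Proof. by move=> hq hi; rewrite /A2_list; case: eqP => // qi; rewrite qi hi in hq. Qed.

Lemma A2_list_eq i j :
  i \in C -> j \in C -> A2_list input deliv i =1 A2_list input deliv j.
Proof.
move=> hi hj q; case: (boolP (q \in C)) => hq.
  by rewrite !A2_list_correct_sender.
by rewrite !A2_list_faulty_sender //; apply: (trb_agreement hTRB).
Qed.

End CorrectProcessesAgree.

Lemma eq_cnt (V : eqType) (n : nat) (L1 L2 : 'I_n -> option V) :
  L1 =1 L2 -> cnt L1 =1 cnt L2.
Proof. by move=> eqL x; apply: eq_card => q; rewrite !inE eqL. Qed.

Lemma A2_decides_Some (V : eqType) (n t : nat) (L : 'I_n -> option V) vi v :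
  A2_decides n t L vi (Some v) -> exists w, n - t <= cnt L (Some w).
Proof. by case=> [[h _] | [[_ [w [h _]]] | [_ [_ //]]]]; [exists vi | exists w]. Qed.

Lemma A2_decides_None (V : eqType) (n t : nat) (L : 'I_n -> option V) vi :
  A2_decides n t L vi None -> forall w, cnt L (Some w) < n - t.
Proof. by case=> [[_ //] | [[_ [w [_ //]]] | [_ []]]]. Qed.

Theorem lemma7 (V : eqType) (n t : nat) (ht : t < n)
    (C : {set 'I_n}) (hC : #|~: C| <= t)
    (input : 'I_n -> V) (deliv : 'I_n -> 'I_n -> option V)
    (hTRB : TRB_phase1 C input deliv)
    (dec : 'I_n -> option V)
    (hdec : forall i, i \in C -> A2_decides n t (A2_list input deliv i) (input i) (dec i))
    (i : 'I_n) (v : V) :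
  i \in C -> dec i = Some v -> forall j, j \in C -> dec j <> None.
Proof.
move=> hi hv j hj hN.
have := hdec i hi; rewrite hv => /A2_decides_Some [w hw].
have := hdec j hj; rewrite hN => /A2_decides_None /(_ w).
by rewrite -(eq_cnt (A2_list_eq hTRB hi hj)) ltnNge hw.
Qed.
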